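(* Let $n\ge1$, $u,v\in\mathfrak{S}_n$ and $J,K\subseteq[n-1]$. Then: (i) if $u\le v$ then $u_J\le v_J$; and if $K\subseteq J$ then $u_K\ge u_J$; (ii) $u_J\wedge v_K=(u\wedge v)_{J\cup K}$; (iii) if $J\subseteq\mathrm{GDes}(v)$ and $K\subseteq\mathrm{GDes}(u)$, then $u_J\vee v_K=(u\vee v)_{J\cap K}$.
   Context: Permutations in one-line notation. For a sequence $(a_1,\ldots,a_m)$ of distinct integers, $\mathrm{st}(a_1,\ldots,a_m)\in\mathfrak{S}_m$ is the unique permutation $x$ with $x_i<x_j\iff a_i<a_j$. For $x\in\mathfrak{S}_a,y\in\mathfrak{S}_b$, $x\times y\in\mathfrak{S}_{a+b}$ has $(x\times y)(i)=x_i$ for $i\le a$ and $(x\times y)(a+j)=a+y_j$. For $u\in\mathfrak{S}_n$ and $J=\{p_1<\cdots<p_k\}\subseteq[n-1]$, $u_J=\mathrm{st}(u_1,\ldots,u_{p_1})\times\mathrm{st}(u_{p_1+1},\ldots,u_{p_2})\times\cdots\times\mathrm{st}(u_{p_k+1},\ldots,u_n)$, and $u_\emptyset=u$. Weak order: $u\le v$ iff $\mathrm{Inv}(u)\subseteq\mathrm{Inv}(v)$, $\mathrm{Inv}(u)=\{(i,j):i<j,u_i>u_j\}$; it is a lattice with meet $\wedge$ and join $\vee$. $\mathrm{GDes}(u)$ is the set of $p\in[n-1]$ with $u_i>u_j$ for all $i\le p<j$. *)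

(* Permutations of {1..n} are 'S_n = {perm 'I_n}, with the
   0-based convention: the one-line entry u_{i+1} is (u i : nat) + 1. *)
From mathcomp Require Import all_boot fingroup perm.
Set Implicit Arguments. Unset Strict Implicit. Unset Printing Implicit Defensive.

Section Defs.
Variable n : nat.

Definition Inv (u : 'S_n) : {set 'I_n * 'I_n} :=
  [set ij : 'I_n * 'I_n | (ij.1 < ij.2) && (u ij.2 < u ij.1)].

Definition weak_le (u v : 'S_n) : bool := Inv u \subset Inv v.

Definition is_meet (u v w : 'S_n) : bool :=
  [&& weak_le w u, weak_le w v &
      [forall z : 'S_n, (weak_le z u && weak_le z v) ==> weak_le z w]].
Definition is_join (u v w : 'S_n) : bool :=
  [&& weak_le u w, weak_le v w &
      [forall z : 'S_n, (weak_le u z && weak_le v z) ==> weak_le w z]].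

(* The meet and join of the weak-order lattice (the pick always succeeds,
   since the weak order on 'S_n is a lattice; 1 is a dummy default). *)
Definition meet (u v : 'S_n) : 'S_n := odflt 1%g [pick w | is_meet u v w].
Definition join (u v : 'S_n) : 'S_n := odflt 1%g [pick w | is_join u v w].

(* Global descents: a cut position p (1 <= p <= n-1, i.e. cutting after the
   first p entries) such that every entry left of the cut exceeds every entry
   right of it.  0-based: for all i < p <= j, u i > u j. *)
Definition GDes (u : 'S_n) : {set 'I_n} :=
  [set p : 'I_n | (0 < p) &&
     [forall i : 'I_n, forall j : 'I_n, ((i < p) && (p <= j)) ==> (u j < u i)]].

(* A cut set J (elements p, 1 <= p <= n-1) splits positions 0..n-1 into
   consecutive blocks; cut p separates positions p-1 and p. *)
Definition same_block (J : {set 'I_n}) (i j : 'I_n) : bool :=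
  [forall p in J, ~~ ((minn i j < p) && (p <= maxn i j))].

Definition blk_start (J : {set 'I_n}) (i : 'I_n) : nat :=
  \max_(p in J | p <= i) (p : nat).

(* u_J = st(block 1) x st(block 2) x ... : position i is sent to the start of
   its block plus the rank of u i among the values of u on its block. *)
Definition parab_fun (J : {set 'I_n}) (u : 'S_n) (i : 'I_n) : 'I_n :=
  insubd i (blk_start J i + #|[set j : 'I_n | same_block J i j & u j < u i]|).

(* insubd i: the value is always < n; the default i is never used. *)
(* turn a function into a permutation (it is always injective here;
   the fallback 1 is never used). *)
Definition mkperm (f : 'I_n -> 'I_n) : 'S_n :=
  (if injectiveb f as b return (injectiveb f = b -> 'S_n)
   then fun H => perm (injectiveP f H) else fun _ => 1%g) (erefl _).

Definition parab (J : {set 'I_n}) (u : 'S_n) : 'S_n := mkperm (parab_fun J u).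

End Defs.

From mathcomp Require Import all_boot fingroup perm.
From mathcomp Require Import zify.
Set Implicit Arguments. Unset Strict Implicit. Unset Printing Implicit Defensive.

(* A permutation is determined by its inversion set, and the inversion sets
   are exactly the biclosed relations: those that are transitive and whose
   complement (among pairs i < j) is transitive too.  The inversions of u_J
   are the inversions of u lying inside a J-block, which gives (i) at once.
   The join of u and v has as inversions the transitive closure of the union
   of theirs, and the meet is obtained dually; (ii) follows because a lower
   bound of u_J and v_K has all its inversions inside blocks of J and of K.
   For (iii), let z be above u_J and v_K.  A pair i < j separated by a cut of
   J but not of K is an inversion of v (that cut is a global descent of v)
   inside a K-block, hence an inversion of z; splitting along intermediate
   cuts and using transitivity, every pair separated by J :|: K but not by
   J :&: K is an inversion of z.  Adding to the inversions of z all pairs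
   separated by J :&: K thus yields a biclosed relation, i.e. an upper bound
   of u and v whose (J :&: K)-parabolic part is below z. *)

Section Parabolic.
Variable n : nat.
Implicit Types (X J K : {set 'I_n}) (u v w z : 'S_n) (s : rel 'I_n).

Lemma same_blockP X (i j : 'I_n) :
  reflect (forall p : 'I_n, p \in X -> ~~ ((minn i j < p) && (p <= maxn i j)))
          (same_block X i j).
Proof. exact: forall_inP. Qed.

Lemma same_blockPn X (i j : 'I_n) :
  reflect (exists2 p : 'I_n, p \in X & (minn i j < p) && (p <= maxn i j))
          (~~ same_block X i j).
Proof.
by apply: (iffP forall_inPn) => -[p pX H]; exists p; rewrite ?negbK in H *.
Qed.

Lemma same_block_refl X i : same_block X i i.
Proof. by apply/same_blockP => p _; apply/negP => /andP[]; lia. Qed.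

Lemma same_blockC X i j : same_block X i j = same_block X j i.
Proof. by rewrite /same_block minnC maxnC. Qed.

Lemma same_block_sub X (i j a b : 'I_n) : i <= a -> a <= b -> b <= j ->
  same_block X i j -> same_block X a b.
Proof.
move=> ia ab bj /same_blockP sij; apply/same_blockP => p /sij.
by rewrite !negb_and -!ltnNge => /orP[] ?; apply/orP; lia.
Qed.

Lemma same_block_trans X i j k :
  same_block X i j -> same_block X j k -> same_block X i k.
Proof.
move=> /same_blockP sij /same_blockP sjk; apply/same_blockP => p pX.
move: (sij p pX) (sjk p pX); rewrite !negb_and -!ltnNge.
by case/orP=> ? /orP[] ?; apply/orP; lia.
Qed.

Lemma same_block_cut X (i j p : 'I_n) :
  p \in X -> i < p -> p <= j -> ~~ same_block X i j.
Proof. by move=> pX ip pj; apply/same_blockPn; exists p => //; lia. Qed.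

Lemma same_blockNP X (i j : 'I_n) : i <= j -> ~~ same_block X i j ->
  exists2 p : 'I_n, p \in X & (i < p) && (p <= j).
Proof.
move=> ij /same_blockPn[p pX].
by rewrite (minn_idPl ij) (maxn_idPr ij); exists p.
Qed.

Lemma same_blockU J K i j :
  same_block (J :|: K) i j = same_block J i j && same_block K i j.
Proof.
apply/same_blockP/andP => [sJK|[/same_blockP sJ /same_blockP sK]].
  by split; apply/same_blockP => p pX; apply: sJK; rewrite inE pX ?orbT.
by move=> p; rewrite inE => /orP[/sJ|/sK].
Qed.

Lemma same_blockS J K i j : K \subset J -> same_block J i j -> same_block K i j.
Proof. by move=> /subsetP KJ /same_blockP sJ; apply/same_blockP => p /KJ /sJ. Qed.

Lemma blk_start_le X (i k : 'I_n) : same_block X i k -> blk_start X i <= k.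
Proof.
move=> /same_blockP sik; apply/bigmax_leqP => p /andP[pX pi].
by case: (leqP p k) => // kp; case/negP: (sik p pX); apply/andP; split; lia.
Qed.

Lemma blk_start_ge X (i p : 'I_n) : p \in X -> p <= i -> p <= blk_start X i.
Proof.
by move=> pX pi; apply: (@leq_bigmax_cond _ _ (fun q : 'I_n => q : nat) p); rewrite pX.
Qed.

Lemma blk_start_eq X (i j : 'I_n) :
  same_block X i j -> blk_start X i = blk_start X j.
Proof.
move=> /same_blockP sij; apply: eq_bigl => p; case pX: (p \in X) => //=.
by move: (sij p pX); case: (leqP p i); case: (leqP p j) => //= *; lia.
Qed.

Lemma card_sub_interval (A : {set 'I_n}) a b :
  (forall k : 'I_n, k \in A -> a <= k < b) -> #|A| <= b - a.
Proof.
move=> Aab; rewrite cardE -(size_map val) -(size_iota a (b - a)).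
apply: uniq_leq_size; first by rewrite map_inj_uniq ?enum_uniq //; exact: val_inj.
move=> _ /mapP[k /[!mem_enum] /Aab /andP[ak kb] ->].
by rewrite mem_iota ak /=; lia.
Qed.

Definition parab_val X u (i : 'I_n) : nat :=
  blk_start X i + #|[set j : 'I_n | same_block X i j & u j < u i]|.

Lemma parab_val_lt X u (i : 'I_n) b :
  (forall k : 'I_n, same_block X i k -> k < b) -> i < b -> parab_val X u i < b.
Proof.
move=> blk_b ib; rewrite /parab_val; set A := [set j | _ & _].
have iA : i \notin A by rewrite inE ltnn andbF.
have : #|i |: A| <= b - blk_start X i.
  apply: card_sub_interval => k; rewrite !inE => /orP[/eqP->|/andP[sik _]].
    by rewrite ib (blk_start_le (same_block_refl _ _)).
  by rewrite (blk_start_le sik) blk_b.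
by rewrite cardsU1 iA /=; have := blk_start_le (same_block_refl X i); lia.
Qed.

Lemma parab_funE X u (i : 'I_n) : val (parab_fun X u i) = parab_val X u i.
Proof. by rewrite val_insubd parab_val_lt. Qed.

Lemma parab_val_same_block X u (i j : 'I_n) :
  same_block X i j -> u i < u j -> parab_val X u i < parab_val X u j.
Proof.
move=> sij uij; rewrite /parab_val (blk_start_eq sij) ltn_add2l.
apply/proper_card/properP; split.
  apply/subsetP => k; rewrite !inE => /andP[sik uk].
  by rewrite (same_block_trans _ sik) 1?same_blockC ?(ltn_trans uk uij).
by exists i; rewrite !inE ?ltnn ?andbF // same_blockC sij uij.
Qed.

Lemma parab_val_cut X u (i j : 'I_n) :
  i < j -> ~~ same_block X i j -> parab_val X u i < parab_val X u j.
Proof.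
move=> ij /(same_blockNP (ltnW ij))[p pX /andP[ip pj]].
apply: (@leq_trans p); last exact: leq_trans (blk_start_ge pX pj) (leq_addr _ _).
apply: parab_val_lt => // k sik; rewrite ltnNge; apply/negP => pk.
case: (leqP i k) => ik; first by case/negP: (same_block_cut pX ip pk).
by move: sik; rewrite same_blockC => /(same_block_sub (leqnn k) (ltnW ik) (leqnn i)); lia.
Qed.

Lemma parab_val_neq X u (i j : 'I_n) : i < j -> parab_val X u i != parab_val X u j.
Proof.
move=> ij; rewrite neq_ltn; case sij: (same_block X i j); last first.
  by rewrite parab_val_cut ?sij.
case: (ltngtP (u i) (u j)) => uij.
- by rewrite parab_val_same_block.
- by rewrite (parab_val_same_block _ uij) ?orbT // same_blockC.
- by move/val_inj/perm_inj: uij ij => ->; rewrite ltnn.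
Qed.

Lemma parab_fun_inj X u : injective (parab_fun X u).
Proof.
move=> i j /(congr1 val); rewrite !parab_funE => eij; apply: val_inj.
by case: (ltngtP i j) => // [/(parab_val_neq X u)|/(parab_val_neq X u)];
   rewrite eij eqxx.
Qed.

Lemma mkpermE (f : 'I_n -> 'I_n) : injective f -> mkperm f =1 f.
Proof.
move=> f_inj; rewrite /mkperm; move: (erefl (injectiveb f)).
case: {2 3}(injectiveb f) => [f_injb x|]; first by rewrite permE.
by have /injectiveP -> := f_inj.
Qed.

Lemma parabE X u : parab X u =1 parab_fun X u.
Proof. exact/mkpermE/parab_fun_inj. Qed.

Definition inversion u (i j : 'I_n) : bool := (i < j) && (u j < u i).

Lemma weak_leP u v :
  reflect (forall i j, inversion u i j -> inversion v i j) (weak_le u v).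
Proof.
apply: (iffP subsetP) => [uv i j|uv [i j]]; last by rewrite !inE; apply: uv.
by have := uv (i, j); rewrite !inE; apply.
Qed.

Lemma inversion_parab X u i j :
  inversion (parab X u) i j = inversion u i j && same_block X i j.
Proof.
rewrite /inversion !parabE !parab_funE; case: (ltnP i j) => //= ij.
case sij: (same_block X i j); last first.
  by rewrite andbF ltnNge ltnW ?parab_val_cut ?sij.
case: (ltngtP (u i) (u j)) => uij.
- by rewrite ltnNge ltnW ?parab_val_same_block.
- by rewrite (parab_val_same_block _ uij) // same_blockC.
- by move/val_inj/perm_inj: uij ij => ->; rewrite ltnn.
Qed.

Lemma parab_weak_le X u v : weak_le u v -> weak_le (parab X u) (parab X v).
Proof.
move=> /weak_leP uv; apply/weak_leP => i j.
by rewrite !inversion_parab => /andP[/uv -> ->].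
Qed.

Lemma parab_weak_leS J K u : K \subset J -> weak_le (parab J u) (parab K u).
Proof.
move=> KJ; apply/weak_leP => i j.
by rewrite !inversion_parab => /andP[-> /(same_blockS KJ)].
Qed.

Definition biclosed s :=
  [/\ forall i j, s i j -> i < j,
      forall i j k, s i j -> s j k -> s i k &
      forall i j k : 'I_n, i < j -> j < k -> s i k -> s i j || s j k].

Lemma inversion_biclosed u : biclosed (inversion u).
Proof.
split=> [i j /andP[] //|i j k /andP[ij uji] /andP[jk ukj]|i j k ij jk /andP[ik uki]].
  by rewrite /inversion (ltn_trans ij jk) (ltn_trans ukj uji).
by rewrite /inversion ij jk /=; case: (ltnP (u j) (u i)) => //= uij; lia.
Qed.

Section Realization.
Variable s : rel 'I_n.
Hypothesis s_biclosed : biclosed s.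

(* [value_lt i j]: the permutation realizing [s] is smaller at [i] than at [j]. *)
Let value_lt (i j : 'I_n) : bool :=
  if i < j then ~~ s i j else if j < i then s j i else false.

Let value_lt_irr i : value_lt i i = false.
Proof. by rewrite /value_lt ltnn. Qed.

Let value_lt_total i j : i != j -> value_lt i j || value_lt j i.
Proof.
move=> ij; rewrite /value_lt; case: (ltngtP i j) => [_|_|/val_inj eij].
- by case: (s i j).
- by case: (s j i).
- by rewrite eij eqxx in ij.
Qed.

Let value_lt_trans i j k : value_lt i j -> value_lt j k -> value_lt i k.
Proof.
case: s_biclosed => s_lt s_trans s_cotrans; rewrite /value_lt.
case: (ltngtP i j) => ij; case: (ltngtP j k) => jk; case: (ltngtP i k) => ik //=;
  try lia.
- by move=> /negPf sij /negPf sjk; apply/negP => /(s_cotrans _ _ _ ij jk); rewrite sij sjk.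
- by move=> /negPf sij skj; apply/negP => sik; rewrite (s_trans _ _ _ sik skj) in sij.
- by move=> /negPf sij ski; move: (s_cotrans _ _ _ ik ij ski); rewrite sij orbF.
- by move/val_inj: ik => <- /negPf sij sji; rewrite sji in sij.
- by move=> sji /negPf sjk; apply/negP => sik; rewrite (s_trans _ _ _ sji sik) in sjk.
- by move=> sji /negPf ski; move: (s_cotrans _ _ _ jk ik sji); rewrite ski.
- by move/val_inj: ik => <- sji /negPf sij; rewrite sji in sij.
- by move=> sji skj; exact: s_trans skj sji.
Qed.

Let value_rank (i : 'I_n) : nat := #|[set k | value_lt k i]|.

Let value_rank_lt i : value_rank i < n.
Proof.
rewrite -[n]card_ord -cardsT; apply/proper_card/properP; split; first exact: subsetT.
by exists i; rewrite ?inE ?value_lt_irr.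
Qed.

Let value_rank_mono i j : value_lt i j -> value_rank i < value_rank j.
Proof.
move=> ij; apply/proper_card/properP; split.
  by apply/subsetP => k; rewrite !inE => /value_lt_trans; apply.
by exists i; rewrite !inE ?value_lt_irr.
Qed.

Let value_rank_inj : injective (fun i => Ordinal (value_rank_lt i)).
Proof.
move=> i j /(congr1 val) /= eij; apply/eqP; apply: contraT => /value_lt_total.
by case/orP=> /value_rank_mono; rewrite eij ltnn.
Qed.

Lemma biclosed_inversion : exists w, inversion w =2 s.
Proof.
case: s_biclosed => s_lt _ _; exists (perm value_rank_inj) => i j.
rewrite /inversion !permE /=; case: (ltnP i j) => ij /=; last first.
  by apply/esym/negP => /s_lt; rewrite ltnNge ij.
case sij: (s i j); first by apply: value_rank_mono; rewrite /value_lt ltnNge (ltnW ij) /= ij.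
by rewrite ltnNge ltnW // value_rank_mono // /value_lt ij sij.
Qed.

End Realization.

Lemma card_ord_ltn m : m <= n -> #|[set k : 'I_n | k < m]| = m.
Proof.
move=> mn; apply/eqP; rewrite eqn_leq; apply/andP; split.
  by rewrite -[X in _ <= X]subn0; apply: card_sub_interval => k; rewrite inE.
have widen_inj : injective (widen_ord mn) by move=> x y /(congr1 val) /= /val_inj.
rewrite -[m in m <= _]card_ord -cardsT -(card_imset _ widen_inj).
by apply: subset_leq_card; apply/subsetP => _ /imsetP[k _ ->]; rewrite inE /=.
Qed.

Lemma card_perm_ltn u i : #|[set j | u j < u i]| = u i.
Proof.
have -> : [set j | u j < u i] = u @^-1: [set k : 'I_n | k < u i].
  by apply/setP => j; rewrite !inE.
by rewrite card_preimset ?card_ord_ltn //; [exact: ltnW | exact: perm_inj].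
Qed.

Lemma perm_ltn_inversion u i j : (u j < u i) =
  if i < j then inversion u i j else if j < i then ~~ inversion u j i else false.
Proof.
rewrite /inversion; case: (ltngtP i j) => [//|ji|/val_inj->]; last by rewrite ltnn.
rewrite /= -leqNgt ltn_neqAle; case: eqP => // /val_inj/perm_inj eji.
by rewrite eji ltnn in ji.
Qed.

Lemma inversion_inj u v : inversion u =2 inversion v -> u = v.
Proof.
move=> uv; apply/permP => i; apply: ord_inj.
rewrite -card_perm_ltn -(card_perm_ltn v); apply: eq_card => j.
by rewrite !inE !perm_ltn_inversion !uv.
Qed.

Lemma weak_le_anti u v : weak_le u v -> weak_le v u -> u = v.
Proof.
move=> /weak_leP uv /weak_leP vu; apply: inversion_inj => i j.
by apply/idP/idP => [/uv|/vu].
Qed.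

Section UnionClosure.
Variables a b : rel 'I_n.
Hypotheses (a_biclosed : biclosed a) (b_biclosed : biclosed b).

Let ab : rel 'I_n := fun i j => a i j || b i j.

(* Every step of [ab] goes up, so [connect ab] restricted to [i < j] is the
   transitive closure of [ab]. *)
Definition tclosureU : rel 'I_n := fun i j => (i < j) && connect ab i j.

Let ab_lt i j : ab i j -> i < j.
Proof. by case: a_biclosed b_biclosed => a_lt _ _ [b_lt _ _] /orP[/a_lt|/b_lt]. Qed.

Lemma tclosureU_min (t : rel 'I_n) :
  (forall i j, ab i j -> t i j) -> (forall i j k, t i j -> t j k -> t i k) ->
  forall i j, tclosureU i j -> t i j.
Proof.
move=> ab_t t_trans.
have path_t p i : path ab i p -> i = last i p \/ t i (last i p).
  elim: p i => [|x p IHp] i /=; first by left.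
  case/andP=> abix /IHp [<-|tx]; right; first exact: ab_t.
  exact: t_trans (ab_t _ _ abix) tx.
move=> i j /andP[ij /connectP[p abp jl]]; subst j; case: (path_t _ _ abp) => // eij.
by rewrite -eij ltnn in ij.
Qed.

Lemma tclosureUl i j : a i j -> tclosureU i j.
Proof.
move=> aij; have abij : ab i j by rewrite /ab aij.
by rewrite /tclosureU connect1 // (ab_lt abij).
Qed.

Lemma tclosureUr i j : b i j -> tclosureU i j.
Proof.
move=> bij; have abij : ab i j by rewrite /ab bij orbT.
by rewrite /tclosureU connect1 // (ab_lt abij).
Qed.

(* A path of [ab] from [i] jumping over [j] can be cut at [j], by cotransitivity
   of the edge that jumps over it. *)
Let path_over p (i j : 'I_n) : path ab i p -> i < j -> j < last i p ->
  connect ab i j || connect ab j (last i p).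
Proof.
case: a_biclosed b_biclosed => _ _ a_cotrans [_ _ b_cotrans].
elim: p i => [|x p IHp] i /=; first by lia.
case/andP=> abix abp ij jl; have xl : connect ab x (last x p) by apply/connectP; exists p.
case: (ltngtP j x) => [jx|xj|/val_inj->]; last by rewrite connect1.
- have: a i j || a j x || (b i j || b j x).
    by case/orP: abix => [/(a_cotrans _ _ _ ij jx)|/(b_cotrans _ _ _ ij jx)] ->; rewrite ?orbT.
  rewrite orbACA => /orP[abij|abjx]; first by rewrite (connect1 (abij : ab i j)).
  by rewrite (connect_trans (connect1 (abjx : ab j x)) xl) orbT.
- case/orP: (IHp x abp xj jl) => [xj'|->]; last by rewrite orbT.
  by rewrite (connect_trans (connect1 abix) xj').
Qed.

Lemma tclosureU_biclosed : biclosed tclosureU.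
Proof.
split=> [i j /andP[] //|i j k /andP[ij cij] /andP[jk cjk]|i j k ij jk].
  by rewrite /tclosureU (ltn_trans ij jk) (connect_trans cij cjk).
case/andP=> ik /connectP[p abp kl]; rewrite /tclosureU ij jk /= kl.
by apply: path_over abp ij _; rewrite -kl.
Qed.

End UnionClosure.

Definition co s : rel 'I_n := fun i j => (i < j) && ~~ s i j.

Lemma co_biclosed s : biclosed s -> biclosed (co s).
Proof.
case=> s_lt s_trans s_cotrans; rewrite /co.
split=> [i j /andP[] //|i j k /andP[ij /negPf sij] /andP[jk /negPf sjk]|i j k ij jk].
  by rewrite (ltn_trans ij jk); apply/negP => /(s_cotrans _ _ _ ij jk); rewrite sij sjk.
case/andP=> _; rewrite ij jk /=; apply: contraR; rewrite negb_or !negbK.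
by case/andP; apply: s_trans.
Qed.

Lemma join_uniq u v w : is_join u v w -> join u v = w.
Proof.
move=> w_join; rewrite /join; case: pickP => [w' w'_join|/(_ w)]; last by rewrite w_join.
case/and3P: w_join => uw vw /forallP w_min; case/and3P: w'_join => uw' vw' /forallP w'_min.
apply: weak_le_anti; [move/implyP: (w'_min w) | move/implyP: (w_min w')]; apply.
  by rewrite uw vw.
by rewrite uw' vw'.
Qed.

Lemma meet_uniq u v w : is_meet u v w -> meet u v = w.
Proof.
move=> w_meet; rewrite /meet; case: pickP => [w' w'_meet|/(_ w)]; last by rewrite w_meet.
case/and3P: w_meet => wu wv /forallP w_max; case/and3P: w'_meet => w'u w'v /forallP w'_max.
apply: weak_le_anti; [move/implyP: (w_max w') | move/implyP: (w'_max w)]; apply.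
  by rewrite w'u w'v.
by rewrite wu wv.
Qed.

Lemma join_exists u v : exists w, is_join u v w.
Proof.
have [u_bc v_bc] := (inversion_biclosed u, inversion_biclosed v).
have [w wE] := biclosed_inversion (tclosureU_biclosed u_bc v_bc).
exists w; apply/and3P; split.
- by apply/weak_leP => i j; rewrite wE; apply: tclosureUl.
- by apply/weak_leP => i j; rewrite wE; apply: tclosureUr.
apply/forallP => z; apply/implyP => /andP[/weak_leP uz /weak_leP vz].
apply/weak_leP => i j; rewrite wE; apply: tclosureU_min => [x y /orP[/uz|/vz] //|].
by case: (inversion_biclosed z).
Qed.

Lemma meet_exists u v : exists w, is_meet u v w.
Proof.
have cu_bc := co_biclosed (inversion_biclosed u).
have cv_bc := co_biclosed (inversion_biclosed v).
have [w wE] := biclosed_inversion (co_biclosed (tclosureU_biclosed cu_bc cv_bc)).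
exists w; apply/and3P; split.
- apply/weak_leP => i j; rewrite wE => /andP[ij]; apply: contraR => uij.
  by apply: (tclosureUl cu_bc cv_bc); rewrite /co ij uij.
- apply/weak_leP => i j; rewrite wE => /andP[ij]; apply: contraR => vij.
  by apply: (tclosureUr cu_bc cv_bc); rewrite /co ij vij.
apply/forallP => z; apply/implyP => /andP[/weak_leP zu /weak_leP zv].
apply/weak_leP => i j zij; have ij : i < j by case/andP: zij.
rewrite wE /co ij /=; apply/negP => cl.
have : co (inversion z) i j.
  apply: tclosureU_min cl => [x y|]; last by case: (co_biclosed (inversion_biclosed z)).
  by case/orP=> /andP[xy]; rewrite /co xy /=; apply: contra; [exact: zu | exact: zv].
by rewrite /co zij andbF.
Qed.

Lemma meet_parab J K u v :
  meet (parab J u) (parab K v) = parab (J :|: K) (meet u v).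
Proof.
have [m m_meet] := meet_exists u v; rewrite (meet_uniq m_meet); apply: meet_uniq.
case/and3P: m_meet => /weak_leP mu /weak_leP mv /forallP m_max.
apply/and3P; split.
- by apply/weak_leP => i j; rewrite !inversion_parab same_blockU => /and3P[/mu -> ->].
- by apply/weak_leP => i j; rewrite !inversion_parab same_blockU => /and3P[/mv -> _ ->].
apply/forallP => z; apply/implyP => /andP[/weak_leP zJ /weak_leP zK].
have zu : weak_le z u.
  by apply/weak_leP => i j /zJ; rewrite inversion_parab => /andP[].
have zv : weak_le z v.
  by apply/weak_leP => i j /zK; rewrite inversion_parab => /andP[].
move/implyP: (m_max z); rewrite zu zv => /(_ isT) /weak_leP zm.
apply/weak_leP => i j zij; rewrite inversion_parab same_blockU zm //.
by move: (zJ _ _ zij) (zK _ _ zij); rewrite !inversion_parab => /andP[_ ->] /andP[_ ->].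
Qed.

Lemma GDes_inversion v (p i j : 'I_n) :
  p \in GDes v -> i < p -> p <= j -> inversion v i j.
Proof.
rewrite inE => /andP[_ /forallP vp] ip pj; have /forallP/(_ j) := vp i.
by rewrite ip pj /inversion (leq_trans ip pj) => /implyP->.
Qed.

Definition cut_extend z X : rel 'I_n :=
  fun i j => inversion z i j || (i < j) && ~~ same_block X i j.

Lemma cut_extend_biclosed z X : biclosed (cut_extend z X).
Proof.
case: (inversion_biclosed z) => z_lt z_trans z_cotrans.
have ce_lt i j : cut_extend z X i j -> i < j by case/orP=> [/z_lt|/andP[]].
split=> // [i j k ceij cejk|i j k ij jk].
  have [ij jk] := (ce_lt _ _ ceij, ce_lt _ _ cejk).
  rewrite /cut_extend (ltn_trans ij jk) /=.
  case/orP: ceij => [zij|/andP[_ cij]]; last first.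
    by apply/orP; right; apply: contra cij; apply: same_block_sub; lia.
  case/orP: cejk => [zjk|/andP[_ cjk]]; first by rewrite (z_trans _ _ _ zij zjk).
  by apply/orP; right; apply: contra cjk; apply: same_block_sub; lia.
rewrite /cut_extend ij jk /=.
case/orP=> [/(z_cotrans _ _ _ ij jk)/orP[]->|/andP[ik]]; rewrite ?orbT //.
case/(same_blockNP (ltnW ik)) => p pX /andP[ip pk].
case: (leqP p j) => [pj|jp].
  by rewrite (same_block_cut pX ip pj) orbT.
by rewrite (same_block_cut pX jp pk) !orbT.
Qed.

Section UpperBound.
Variables (u v z : 'S_n) (J K : {set 'I_n}).
Hypotheses (J_GDes : J \subset GDes v) (K_GDes : K \subset GDes u).
Hypothesis uJ_z : forall i j, inversion u i j -> same_block J i j -> inversion z i j.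
Hypothesis vK_z : forall i j, inversion v i j -> same_block K i j -> inversion z i j.

Lemma inversion_between_cuts (i j : 'I_n) : i < j ->
  same_block (J :&: K) i j -> ~~ same_block (J :|: K) i j -> inversion z i j.
Proof.
case: (inversion_biclosed z) => _ z_trans _.
have [d] := ubnP (j - i); elim: d i j => // d IHd i j dij ij sJK.
rewrite same_blockU; case sJ: (same_block J i j); case sK: (same_block K i j) => //= _.
- have [q qK /andP[iq qj]] := same_blockNP (ltnW ij) (negbT sK).
  by apply: uJ_z sJ; apply: GDes_inversion iq qj; apply: (subsetP K_GDes).
- have [p pJ /andP[ip pj]] := same_blockNP (ltnW ij) (negbT sJ).
  by apply: vK_z sK; apply: GDes_inversion ip pj; apply: (subsetP J_GDes).
have [p pJ /andP[ip pj]] := same_blockNP (ltnW ij) (negbT sJ).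
have [q qK /andP[iq qj]] := same_blockNP (ltnW ij) (negbT sK).
have IH (a b c : 'I_n) : c \in J :|: K -> i <= a -> a < c -> c <= b -> b <= j ->
    b - a < j - i -> inversion z a b.
  move=> cU ia ac cb bj ba; have ab := leq_trans ac cb.
  apply: (IHd a b (leq_trans ba dij) ab _ (same_block_cut cU ac cb)).
  exact: same_block_sub ia (ltnW ab) bj sJK.
(* with two cuts c1 < c2 in (i, j], split the pair at c2 - 1 *)
have split_at (c1 c2 : 'I_n) : c1 \in J :|: K -> c2 \in J :|: K ->
    i < c1 -> c1 < c2 -> c2 <= j -> inversion z i j.
  move=> c1U c2U ic1 c12 c2j; have kn := leq_ltn_trans (leq_pred c2) (ltn_ord c2).
  have [c1k ik kc2 dik dkj] : [/\ c1 <= c2.-1, i <= c2.-1, c2.-1 < c2,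
      c2.-1 - i < j - i & j - c2.-1 < j - i] by clear -ic1 c12 c2j; split; lia.
  apply: (z_trans _ (Ordinal kn)); [apply: (IH _ _ c1) | apply: (IH _ _ c2)] => //=.
  exact: leq_trans (leq_pred c2) c2j.
case: (ltngtP p q) => [pq|qp|/val_inj epq].
- by apply: (split_at p q); rewrite // inE ?pJ ?qK ?orbT.
- by apply: (split_at q p); rewrite // inE ?pJ ?qK ?orbT.
- have pJK : p \in J :&: K by rewrite inE pJ epq qK.
  by rewrite (negbTE (same_block_cut pJK ip pj)) in sJK.
Qed.

Lemma cut_extend_ge w :
  (forall i j, inversion w i j -> same_block (J :|: K) i j -> inversion z i j) ->
  forall i j, inversion w i j -> cut_extend z (J :&: K) i j.
Proof.
move=> wz i j wij; have ij : i < j by case/andP: wij.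
rewrite /cut_extend; case sJK: (same_block (J :&: K) i j); last by rewrite ij orbT.
case sU: (same_block (J :|: K) i j); first by rewrite wz.
by rewrite inversion_between_cuts ?sU.
Qed.

End UpperBound.

Lemma join_parab J K u v : J \subset GDes v -> K \subset GDes u ->
  join (parab J u) (parab K v) = parab (J :&: K) (join u v).
Proof.
move=> J_GDes K_GDes; have [m m_join] := join_exists u v.
rewrite (join_uniq m_join); apply: join_uniq.
case/and3P: m_join => /weak_leP um /weak_leP vm /forallP m_min.
apply/and3P; split.
- apply/weak_leP => i j; rewrite !inversion_parab => /andP[/um ->].
  exact/same_blockS/subsetIl.
- apply/weak_leP => i j; rewrite !inversion_parab => /andP[/vm ->].
  exact/same_blockS/subsetIr.
apply/forallP => z; apply/implyP => /andP[/weak_leP Jz /weak_leP Kz].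
have uJ_z i j : inversion u i j -> same_block J i j -> inversion z i j.
  by move=> uij sij; apply: Jz; rewrite inversion_parab uij.
have vK_z i j : inversion v i j -> same_block K i j -> inversion z i j.
  by move=> vij sij; apply: Kz; rewrite inversion_parab vij.
have [z' z'E] := biclosed_inversion (cut_extend_biclosed z (J :&: K)).
have ge_z' := cut_extend_ge J_GDes K_GDes uJ_z vK_z.
have uz' : weak_le u z'.
  apply/weak_leP => i j uij; rewrite z'E; apply: ge_z' uij => x y uxy.
  by rewrite same_blockU => /andP[/(uJ_z _ _ uxy)].
have vz' : weak_le v z'.
  apply/weak_leP => i j vij; rewrite z'E; apply: ge_z' vij => x y vxy.
  by rewrite same_blockU => /andP[_ /(vK_z _ _ vxy)].
move/implyP: (m_min z'); rewrite uz' vz' => /(_ isT) /weak_leP mz'.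
apply/weak_leP => i j; rewrite inversion_parab => /andP[/mz' + sij].
by rewrite z'E /cut_extend sij andbF orbF.
Qed.

End Parabolic.

Theorem mainTheorem6 (n : nat) (u v : 'S_n) (J K : {set 'I_n}) :
  0 < n ->
  (forall p : 'I_n, p \in J -> 0 < p) ->
  (forall p : 'I_n, p \in K -> 0 < p) ->
  [/\ (weak_le u v -> weak_le (parab J u) (parab J v)),
      (K \subset J -> weak_le (parab J u) (parab K u)),
      meet (parab J u) (parab K v) = parab (J :|: K) (meet u v) &
      (J \subset GDes v -> K \subset GDes u ->
         join (parab J u) (parab K v) = parab (J :&: K) (join u v))].
Proof.
move=> _ _ _; split.
- exact: parab_weak_le.
- exact: parab_weak_leS.
- exact: meet_parab.
- exact: join_parab.
Qed.
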